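(* Let $D$ be a strongly connected digraph with $m\ge 3$ arcs. Then $rc^*(D)=src^*(D)=m$ if and only if $D$ is the directed cycle $\overrightarrow{C_m}$ of length $m$.
   Context: Digraphs are finite without loops or multiple arcs. For a strongly connected digraph $D$ and an arc-colouring $\Gamma:A(D)\to\{1,\dots,k\}$, a directed path is rainbow if its arcs have pairwise distinct colours. $\Gamma$ is rainbow connected if for every ordered pair of distinct vertices $x,y$ there is a rainbow directed $xy$-path; $rc^*(D)$ is the minimum $k$ admitting such a colouring. $\Gamma$ is strongly rainbow connected if for every ordered pair of distinct vertices $x,y$ there is a rainbow directed $xy$-path of length $d_D(x,y)$; $src^*(D)$ is the minimum such $k$. *)

From mathcomp Require Import all_boot.
Set Implicit Arguments. Unset Strict Implicit. Unset Printing Implicit Defensive.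

(* A digraph on a finite vertex type T is an arc relation r : rel T without
   loops (irreflexive); multiple arcs are impossible by construction. *)
Definition loopless (T : finType) (r : rel T) : Prop := irreflexive r.

Definition arcs (T : finType) (r : rel T) : {set T * T} :=
  [set a | r a.1 a.2].
Definition num_arcs (T : finType) (r : rel T) : nat := #|arcs r|.

Definition strongly_connected (T : finType) (r : rel T) : Prop :=
  forall x y : T, connect r x y.

(* A directed x-y path: vertex sequence x :: p with consecutive arcs,
   ending at y, pairwise distinct vertices. Its length is size p. *)
Definition dpath (T : finType) (r : rel T) (x y : T) (p : seq T) : bool :=
  [&& path r x p, last x p == y & uniq (x :: p)].

Definition dwalk (T : finType) (r : rel T) (x y : T) (p : seq T) : bool :=
  path r x p && (last x p == y).

Definition arc_colours (T : finType) (c : T -> T -> nat) (x : T) (p : seq T)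
  : seq nat := pairmap c x p.

Definition rainbow (T : finType) (c : T -> T -> nat) (x : T) (p : seq T)
  : bool := uniq (arc_colours c x p).

Definition colouring (T : finType) (r : rel T) (k : nat) (c : T -> T -> nat)
  : Prop := forall x y, r x y -> 0 < c x y <= k.

Definition rainbow_connected (T : finType) (r : rel T) (c : T -> T -> nat)
  : Prop :=
  forall x y : T, x != y -> exists p, dpath r x y p && rainbow c x p.

Definition geodesic (T : finType) (r : rel T) (x y : T) (p : seq T) : Prop :=
  dpath r x y p /\ forall q, dwalk r x y q -> size p <= size q.

Definition strongly_rainbow_connected (T : finType) (r : rel T)
  (c : T -> T -> nat) : Prop :=
  forall x y : T, x != y -> exists p, geodesic r x y p /\ rainbow c x p.

(* rc*(D) = k, i.e. k is the minimum number of colours of a rainbow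
   connected colouring. *)
Definition rc_eq (T : finType) (r : rel T) (k : nat) : Prop :=
  (exists c, colouring r k c /\ rainbow_connected r c) /\
  (forall k' c, k' < k -> colouring r k' c -> ~ rainbow_connected r c).

Definition src_eq (T : finType) (r : rel T) (k : nat) : Prop :=
  (exists c, colouring r k c /\ strongly_rainbow_connected r c) /\
  (forall k' c, k' < k -> colouring r k' c -> ~ strongly_rainbow_connected r c).

Definition is_directed_cycle (T : finType) (r : rel T) (m : nat) : Prop :=
  exists f : T -> 'I_m, bijective f /\
    forall x y, r x y = (val (f y) == (val (f x)).+1 %% m).

From mathcomp Require Import all_boot.
Set Implicit Arguments. Unset Strict Implicit. Unset Printing Implicit Defensive.

(* Colouring every arc by its head makes every path rainbow, and shortest walks
   are paths; so a strongly connected digraph on [n] vertices has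
   [rc* <= src* <= n], and [rc* = m] forces [m <= n]. Since every vertex has an
   out-arc, the [m] arcs are then exactly one out-arc per vertex, and strong
   connectivity makes this successor function a single cyclic permutation.
   Conversely, on a directed cycle with at least 3 vertices the only path from
   [a] to the successor of [b] uses the out-arcs of both [a] and [b] (for one of
   the two orders of [a], [b]), so a rainbow connected colouring gives distinct
   vertices out-arcs of distinct colours and needs [n = m] colours. *)

Definition head_colouring (T : finType) (x y : T) : nat := (enum_rank y).+1.

Lemma head_colouring_colouring (T : finType) (r : rel T) :
  colouring r #|T| (@head_colouring T).
Proof. by move=> x y _; exact: ltn_ord. Qed.

Lemma rainbow_head_colouring (T : finType) (x : T) p :
  uniq p -> rainbow (@head_colouring T) x p.
Proof.
rewrite /rainbow.
have -> : arc_colours (@head_colouring T) x p = map (head_colouring x) p.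
  by elim: p x => //= y p IHp x; rewrite IHp.
by move=> uniq_p; rewrite map_inj_uniq // => y y' /succn_inj /val_inj /enum_rank_inj.
Qed.

Lemma pairmap_traject (T : Type) (R : Type) (c : T -> T -> R) (s : T -> T) x n :
  pairmap c x (traject s (s x) n) = map (fun v => c v (s v)) (traject s x n).
Proof. by elim: n x => //= n IHn x; rewrite IHn. Qed.

Section Geodesics.

Variables (T : finType) (r : rel T).

Lemma connect_geodesic x y : connect r x y -> exists p, geodesic r x y p.
Proof.
move=> /connectP[p0 r_p0 y_p0].
pose has_walk n := [exists q : n.-tuple T, dwalk r x y q].
have walk_ex : exists n, has_walk n.
  by exists (size p0); apply/existsP; exists (in_tuple p0); rewrite /dwalk /= r_p0 -y_p0 eqxx.
case: (ex_minnP walk_ex) => n /existsP[q /andP[r_q /eqP]] + n_min.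
case: (shortenP r_q) => p r_p uniq_xp sub_pq /eqP y_p.
exists p; split; first by rewrite /dpath r_p y_p uniq_xp.
move=> q' walk_q'; apply: (@leq_trans n).
  by rewrite -(size_tuple q); apply: uniq_leq_size sub_pq; case/andP: uniq_xp.
by apply: n_min; apply/existsP; exists (in_tuple q').
Qed.

Lemma strongly_rainbow_connected_rainbow c :
  strongly_rainbow_connected r c -> rainbow_connected r c.
Proof. by move=> src x y xy; have [p [[dp _] rp]] := src x y xy; exists p; rewrite dp. Qed.

Lemma head_colouring_strongly_rainbow_connected :
  strongly_connected r -> strongly_rainbow_connected r (@head_colouring T).
Proof.
move=> sc x y _; have [p geo_p] := connect_geodesic (sc x y).
exists p; split=> //; apply: rainbow_head_colouring.
by case: geo_p => /and3P[_ _ /andP[]].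
Qed.

Lemma rc_eq_le_card m : strongly_connected r -> rc_eq r m -> m <= #|T|.
Proof.
move=> sc [_ rc_min]; rewrite leqNgt; apply/negP => lt_card.
apply: (rc_min _ (@head_colouring T) lt_card); first exact: head_colouring_colouring.
exact/strongly_rainbow_connected_rainbow/head_colouring_strongly_rainbow_connected.
Qed.

Lemma succ_of_few_arcs :
  strongly_connected r -> 1 < #|T| -> num_arcs r <= #|T| ->
  exists s : T -> T, forall x y, r x y = (y == s x).
Proof.
move=> sc T_gt1 few_arcs.
have out_arc x : exists y, r x y.
  have /card_gt0P[y y_ne_x] : 0 < #|predC1 x| by rewrite cardC1 -subn1 subn_gt0.
  move/connectP: (sc x y) y_ne_x => [[|z p] /= p_r ->]; first by rewrite inE eqxx.
  by case/andP: p_r => r_xz _; exists z.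
pose s x := xchoose (out_arc x).
have arcsE : arcs r = [set (x, s x) | x : T].
  apply/esym/eqP; rewrite eqEcard card_imset ?few_arcs ?andbT; last by move=> x y [].
  by apply/subsetP => _ /imsetP[x _ ->]; rewrite inE /= xchooseP.
exists s => x y; apply/idP/eqP => [r_xy|->]; last exact: xchooseP.
have : (x, y) \in arcs r by rewrite inE.
by rewrite arcsE => /imsetP[z _ [-> ->]].
Qed.

End Geodesics.

Section Successor.

Variables (T : finType) (r : rel T) (s : T -> T).
Hypothesis r_succ : forall x y, r x y = (y == s x).

Lemma path_succ x p : path r x p = fpath s x p.
Proof. by apply: eq_path => y z; rewrite r_succ eq_sym. Qed.

Lemma connect_succ : connect r =2 fconnect s.
Proof. by apply: eq_connect => y z; rewrite r_succ eq_sym. Qed.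

Lemma num_arcs_succ : num_arcs r = #|T|.
Proof.
rewrite /num_arcs; have -> : arcs r = [set (x, s x) | x : T].
  apply/setP => -[x y]; rewrite inE r_succ /=.
  by apply/eqP/imsetP => [->|[z _ [-> ->]]]; first exists x.
by rewrite card_imset // => x y [].
Qed.

Hypothesis sc : strongly_connected r.

Lemma succ_inj : injective s.
Proof.
have onto y : y \in codom s.
  rewrite -(iter_findex (_ : fconnect s (s y) y)) -?connect_succ //.
  by rewrite -iterSr iterS codom_f.
have /image_injP s_inj : #|codom s| == #|T| by apply/eqP/eq_card => y; rewrite onto.
by move=> x y; apply: s_inj.
Qed.

Lemma succ_succ_neq x : 2 < #|T| -> s (s x) != x.
Proof.
move=> T_gt2; apply: contraTneq T_gt2 => ssx; rewrite -leqNgt.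
have loop_x : looping s x 2 by rewrite /looping /= ssx mem_head.
rewrite -(size_traject s x 2); apply: leq_trans (card_size _).
apply/subset_leq_card/subsetP => y _.
have x_y : fconnect s x y by rewrite -connect_succ.
by rewrite -(iter_findex x_y); apply/loopingP.
Qed.

Lemma rainbow_succ_colour_neq c a b p :
  a != b -> a != s b -> dpath r a (s b) p -> rainbow c a p ->
  c a (s a) != c b (s b).
Proof.
move=> a_ne_b a_ne_sb /and3P[+ /eqP + _]; rewrite path_succ.
case/fpathP=> n ->; rewrite last_traject /rainbow /arc_colours pairmap_traject.
case: n => [/= a_eq_sb|n]; first by rewrite a_eq_sb eqxx in a_ne_sb.
move=> /succ_inj b_eq /= /andP[colour_a_new _]; apply: contra colour_a_new => /eqP ->.
apply: (map_f (fun v => c v (s v))); apply/trajectP.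
case: n b_eq => [/= a_eq_b|n b_eq]; first by rewrite a_eq_b eqxx in a_ne_b.
by exists n => //; rewrite -iterSr -b_eq.
Qed.

Lemma rainbow_connected_card_le k c :
  2 < #|T| -> colouring r k c -> rainbow_connected r c -> #|T| <= k.
Proof.
move=> T_gt2 col_c rc_c; pose h v := c v (s v).
have h_inj : injective h.
  move=> a b hab; apply/eqP/contraT => a_ne_b.
  wlog a_ne_sb : a b a_ne_b hab / a != s b => [wlog_h|].
    have [a_eq_sb|] := eqVneq a (s b); last exact: wlog_h.
    apply: (wlog_h b a); rewrite 1?eq_sym //.
    by rewrite a_eq_sb succ_succ_neq.
  have [p /andP[dp rp]] := rc_c a (s b) a_ne_sb.
  by have := rainbow_succ_colour_neq a_ne_b a_ne_sb dp rp; rewrite -[c a _]/(h a) hab eqxx.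
have colours_in : {subset map h (enum T) <= iota 1 k}.
  move=> _ /mapP[v _ ->]; rewrite mem_iota add1n ltnS.
  by apply: col_c; rewrite r_succ.
have := uniq_leq_size _ colours_in; rewrite map_inj_uniq ?enum_uniq //.
by rewrite size_map size_iota -cardT; exact.
Qed.

Lemma succ_rc_src_eq : 2 < #|T| -> rc_eq r #|T| /\ src_eq r #|T|.
Proof.
move=> T_gt2; have src := head_colouring_strongly_rainbow_connected sc.
have rc_min k c : k < #|T| -> colouring r k c -> ~ rainbow_connected r c.
  by move=> lt_k col_c /(rainbow_connected_card_le T_gt2 col_c); rewrite leqNgt lt_k.
split; split.
- exists (@head_colouring T); split; first exact: head_colouring_colouring.
  exact: strongly_rainbow_connected_rainbow src.
- exact: rc_min.
- by exists (@head_colouring T); split; first exact: head_colouring_colouring.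
- move=> k c lt_k col_c /strongly_rainbow_connected_rainbow; exact: rc_min lt_k col_c.
Qed.

Lemma succ_directed_cycle (x0 : T) : is_directed_cycle r #|T|.
Proof.
have x0_T y : fconnect s x0 y by rewrite -connect_succ.
have order_x0 : order s x0 = #|T| by apply: eq_card => y; rewrite !inE x0_T.
have idx_lt y : findex s x0 y < #|T| by rewrite -order_x0 findex_max.
pose f y := Ordinal (idx_lt y).
have f_succ y : val (f (s y)) = (f y).+1 %% #|T|.
  rewrite /= -{1}(iter_findex (x0_T y)) -iterS.
  have := idx_lt y; rewrite leq_eqVlt => /predU1P[last_y|lt_y].
    by rewrite last_y -order_x0 iter_order ?findex0 ?modnn //; exact: succ_inj.
  by rewrite findex_iter ?order_x0 ?modn_small.
have f_inj : injective f.
  by move=> y y' /(congr1 val) /= eq_idx; rewrite -(iter_findex (x0_T y)) eq_idx iter_findex.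
exists f; split; first exact: inj_card_bij f_inj (eq_leq (card_ord _)).
by move=> x y; rewrite r_succ -(inj_eq f_inj) -val_eqE f_succ.
Qed.

End Successor.

Section DirectedCycle.

Variables (T : finType) (r : rel T) (m : nat).
Hypothesis cycle_r : is_directed_cycle r m.

Lemma directed_cycle_card : #|T| = m.
Proof. by case: cycle_r => f [bij_f _]; rewrite (bij_eq_card bij_f) card_ord. Qed.

Lemma directed_cycle_succ : exists s : T -> T, forall x y, r x y = (y == s x).
Proof.
case: cycle_r => f [[g fK gK] r_f]; exists (fun x => g (ordS (f x))) => x y.
by rewrite r_f -(inj_eq (can_inj fK)) gK.
Qed.

End DirectedCycle.

Theorem corollary5 (T : finType) (r : rel T) (m : nat) :
  loopless r -> strongly_connected r -> num_arcs r = m -> 3 <= m ->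
  (rc_eq r m /\ src_eq r m <-> is_directed_cycle r m).
Proof.
move=> _ sc num_arcs_m m_ge3; split=> [[rc_m _]|cycle_r].
  have m_le_T := rc_eq_le_card sc rc_m.
  have /card_gt0P[x0 _] := leq_trans (ltnW (ltnW m_ge3)) m_le_T.
  rewrite -num_arcs_m in m_le_T m_ge3 *.
  have [s r_succ] := succ_of_few_arcs sc (leq_trans (ltnW m_ge3) m_le_T) m_le_T.
  by rewrite (num_arcs_succ r_succ); exact: succ_directed_cycle.
have [s r_succ] := directed_cycle_succ cycle_r.
rewrite -(directed_cycle_card cycle_r) in m_ge3 *.
exact: succ_rc_src_eq.
Qed.
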